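(* Let $A$ be a $d\times n$ integer matrix whose columns generate $\mathbb{Z}^d$ and such that $(1,\dots,1)$ lies in the $\mathbb{Q}$-row span of $A$. Then for every $\beta\in\mathbb{C}^d$, $M_A(\beta)$ endowed with its quotient $(F,V)$-bifiltration is nicely bifiltered.
   Context: $D=\mathbb{C}[x_1,\dots,x_n]\langle\partial_1,\dots,\partial_n\rangle$. $I_A\subset\mathbb{C}[\partial]$ is generated by $\partial^u-\partial^v$ with $Au=Av$; $H_A(\beta)=DI_A+\sum_iD(\sum_ja_{ij}x_j\partial_j-\beta_i)$; $M_A(\beta)=D/H_A(\beta)$. $F$-filtration: weights $0$ on $x$, $1$ on $\partial$. $V$-filtration along the origin: weights $-1$ on $x_i$, $1$ on $\partial_i$. $F_{d,k}(D)=F_d(D)\cap V_k(D)$, and $F_{d,k}(M_A(\beta))=(F_{d,k}(D)+H_A(\beta))/H_A(\beta)$. The bifiltration is nice if $(\bigcup_{d'}F_{d',k}(M))\cap(\bigcup_{k'}F_{d,k'}(M))=F_{d,k}(M)$ for all $d,k$. *)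

From Stdlib Require Import Reals.
From HB Require Import structures.
From mathcomp Require Import all_boot all_order all_algebra.
Set Implicit Arguments. Unset Strict Implicit. Unset Printing Implicit Defensive.

Definition CC : Type := (R * R)%type.
Definition Cadd (a b : CC) : CC := (Rplus a.1 b.1, Rplus a.2 b.2).
Definition Cmul (a b : CC) : CC :=
  (Rminus (Rmult a.1 b.1) (Rmult a.2 b.2), Rplus (Rmult a.1 b.2) (Rmult a.2 b.1)).
Definition Copp (a : CC) : CC := (Ropp a.1, Ropp a.2).
Definition Cnat (k : nat) : CC := (INR k, INR 0).
Definition C0 : CC := Cnat 0.
Definition C1 : CC := Cnat 1.
Definition Cint (z : int) : CC :=
  match z with Posz k => Cnat k | Negz k => Copp (Cnat k.+1) end.

(* normally ordered monomial x^a d^b, encoded as the pair (a, b) *)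
Definition mon (n : nat) := ({ffun 'I_n -> nat} * {ffun 'I_n -> nat})%type.
Definition expr (n : nat) := seq (CC * mon n).
(* an element of D, given by its coefficients in the CC-basis {x^a d^b} *)
Definition Del (n : nat) := mon n -> CC.

Definition ev n (s : expr n) : Del n :=
  fun m => foldr (fun t acc => if t.2 == m then Cadd t.1 acc else acc) C0 s.

Definition Dadd n (P Q : Del n) : Del n := fun m => Cadd (P m) (Q m).

(* Weyl product of monomials:
   x^a d^b . x^c d^e = sum_{k <= b, k <= c} prod_i CC(b_i,k_i) CC(c_i,k_i) k_i!  x^(a+c-k) d^(b+e-k) *)
Definition mmul n (m1 m2 : mon n) : expr n :=
  let a := m1.1 in let b := m1.2 in let c := m2.1 in let e := m2.2 in
  let N := (\sum_(i < n) b i)%N in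
  [seq (Cnat (\prod_(i < n) ('C(b i, k i) * 'C(c i, k i) * (k i)`!))%N,
        ([ffun i => a i + c i - k i], [ffun i => b i + e i - k i]))
  | k : {ffun 'I_n -> nat} <- [seq [ffun i => nat_of_ord (kk i)] : {ffun 'I_n -> nat} | kk : {ffun 'I_n -> 'I_N.+1} <- enum {ffun 'I_n -> 'I_N.+1}]
  & [forall i, k i <= minn (b i) (c i)]].

Definition emul n (s t : expr n) : expr n :=
  flatten [seq flatten [seq [seq (Cmul (Cmul t1.1 t2.1) u.1, u.2) | u <- mmul t1.2 t2.2]
                       | t2 <- t] | t1 <- s].

Definition lideal n (G : expr n -> Prop) (P : Del n) : Prop :=
  exists l : seq (expr n * expr n),
    (forall p, List.In p l -> G p.2) /\ P = ev (flatten [seq emul p.1 p.2 | p <- l]).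

Definition zerof n : {ffun 'I_n -> nat} := [ffun _ => 0].
Definition unitf n (j : 'I_n) : {ffun 'I_n -> nat} := [ffun i => if i == j then 1 else 0].

(* generators d^u - d^v of I_A, with A u = A v *)
Definition toric_gen d n (A : 'M[int]_(d, n)) (g : expr n) : Prop :=
  exists u v : {ffun 'I_n -> nat},
    (forall i, \sum_(j < n) A i j * (u j)%:Z = \sum_(j < n) A i j * (v j)%:Z)%R /\
    g = [:: (C1, (zerof n, u)); (Copp C1, (zerof n, v))].

(* Euler operator sum_j a_ij x_j d_j - beta_i *)
Definition euler d n (A : 'M[int]_(d, n)) (beta : 'I_d -> CC) (i : 'I_d) : expr n :=
  [seq (Cint (A i j), (unitf j, unitf j)) | j <- enum 'I_n] ++
  [:: (Copp (beta i), (zerof n, zerof n))].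

Definition HA d n (A : 'M[int]_(d, n)) (beta : 'I_d -> CC) : Del n -> Prop :=
  lideal (fun g => toric_gen A g \/ exists i, g = euler A beta i).

(* weights: F (0 on x, 1 on d), V (-1 on x, 1 on d) *)
Definition Fw n (m : mon n) : int := ((\sum_(i < n) m.2 i)%N)%:Z.
Definition Vw n (m : mon n) : int :=
  (((\sum_(i < n) m.2 i)%N)%:Z - ((\sum_(i < n) m.1 i)%N)%:Z)%R.

Definition Ffilt n (dd : int) (P : Del n) : Prop :=
  exists s : expr n, all (fun t => (Fw t.2 <= dd)%R) s /\ P = ev s.
Definition Vfilt n (k : int) (P : Del n) : Prop :=
  exists s : expr n, all (fun t => (Vw t.2 <= k)%R) s /\ P = ev s.
Definition FVD n (dd k : int) (P : Del n) : Prop := Ffilt dd P /\ Vfilt k P.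

(* F_{d,k}(M_A(beta)) = (F_{d,k}(D) + H_A(beta)) / H_A(beta), represented by its
   preimage F_{d,k}(D) + H_A(beta) in D *)
Definition FVM d n (A : 'M[int]_(d, n)) (beta : 'I_d -> CC) (dd k : int) (P : Del n) : Prop :=
  exists Q R, FVD dd k Q /\ HA A beta R /\ P = Dadd Q R.

Definition nicely_bifiltered d n (A : 'M[int]_(d, n)) (beta : 'I_d -> CC) : Prop :=
  forall (dd k : int) (P : Del n),
    ((exists dd', FVM A beta dd' k P) /\ (exists k', FVM A beta dd k' P)) <-> FVM A beta dd k P.

(* H_A(beta) is homogeneous for the V-grading of D (weight -1 on x, 1 on d):
   the Euler operators have V-weight 0, and a toric generator d^u - d^v is
   homogeneous because A u = A v and (1,...,1) in the row span of A force
   |u| = |v|.  Hence the projection of D onto V-weights <= k preserves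
   H_A(beta) and (being a monomial truncation) the F-filtration.  If
   P = Q1 + R1 = Q2 + R2 with Q1 in V_k(D) and Q2 in F_d(D), then
   P = [Q2]_{<=k} + ([R2]_{<=k} + [R1]_{>k}) exhibits P in F_{d,k}(M). *)
From Stdlib Require Import Reals FunctionalExtensionality.

From HB Require Import structures.
From mathcomp Require Import all_boot all_order all_algebra.

Import GRing.Theory Num.Theory.
Set Implicit Arguments. Unset Strict Implicit.

Lemma Cadd0l (x : CC) : Cadd C0 x = x.
Proof. by case: x => a b; rewrite /Cadd /C0 /Cnat /= !Rplus_0_l. Qed.

Lemma Cadd0r (x : CC) : Cadd x C0 = x.
Proof. by case: x => a b; rewrite /Cadd /C0 /Cnat /= !Rplus_0_r. Qed.

Lemma CaddA (x y z : CC) : Cadd x (Cadd y z) = Cadd (Cadd x y) z.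
Proof. by rewrite /Cadd /= !Rplus_assoc. Qed.

Lemma ev_cat n (s t : expr n) : ev (s ++ t) = Dadd (ev s) (ev t).
Proof.
apply: functional_extensionality => m; rewrite /Dadd.
elim: s => [|u s IH] /=; first by rewrite Cadd0l.
by rewrite /ev /=; case: (u.2 == m); rewrite // -CaddA -IH.
Qed.

Definition Vpart n (p : pred int) (P : Del n) : Del n :=
  fun m => if p (Vw m) then P m else C0.

Definition Vhomog n (w : int) (s : expr n) : bool := all (fun t => Vw t.2 == w) s.

Lemma ev_filter_Vw n (p : pred int) (s : expr n) :
  ev [seq t <- s | p (Vw t.2)] = Vpart p (ev s).
Proof.
apply: functional_extensionality => m; rewrite /Vpart.
elim: s => [|t s IH] /=; first by case: (p (Vw m)).
case: (eqVneq t.2 m) => [e|ne].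
  case pt: (p (Vw t.2)) => /=; last by rewrite IH -e pt.
  by rewrite /ev /= e eqxx -/(ev _ _) IH -e pt.
by case: (p (Vw t.2)); rewrite /ev /= ?(negbTE ne) -/(ev _ _).
Qed.

Lemma sumn_ffun_subn n (b e k : {ffun 'I_n -> nat}) :
  (forall i, k i <= b i + e i)%N ->
  ((\sum_(i < n) [ffun i => b i + e i - k i] i)%N%:Z =
   (\sum_(i < n) b i)%N%:Z + (\sum_(i < n) e i)%N%:Z - (\sum_(i < n) k i)%N%:Z)%R.
Proof.
move=> hk; have hsum : (\sum_(i < n) [ffun i => b i + e i - k i] i + \sum_(i < n) k i
                       = \sum_(i < n) b i + \sum_(i < n) e i)%N.
  by rewrite -!big_split /=; apply: eq_bigr => i _; rewrite ffunE subnK.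
by rewrite -PoszD -hsum PoszD addrK.
Qed.

(* Each term x^(a+c-k) d^(b+e-k) loses |k| in both degrees, so the V-weight adds up. *)
Lemma Vhomog_mmul n (m1 m2 : mon n) : Vhomog (Vw m1 + Vw m2)%R (mmul m1 m2).
Proof.
rewrite /Vhomog /mmul all_map all_filter; apply/allP => k _ /=.
apply/implyP => /forallP hk.
have [hb hc] : (forall i, k i <= m1.2 i + m2.2 i)%N /\ (forall i, k i <= m1.1 i + m2.1 i)%N.
  by split=> i; have := hk i; rewrite leq_min => /andP[h1 h2];
     [apply: leq_trans h1 (leq_addr _ _) | apply: leq_trans h2 (leq_addl _ _)].
rewrite /Vw /= !sumn_ffun_subn //; apply/eqP.
by rewrite opprB addrA addrNK opprD addrACA.
Qed.

Lemma emul_cons n (t : CC * mon n) (s g : expr n) :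
  emul (t :: s) g = emul [:: t] g ++ emul s g.
Proof. by rewrite /emul /= cats0. Qed.

Lemma Vhomog_emul1 n (t : CC * mon n) (g : expr n) (w : int) :
  Vhomog w g -> Vhomog (Vw t.2 + w)%R (emul [:: t] g).
Proof.
rewrite /emul /= cats0; elim: g => //= t2 g IHg /andP [/eqP e hg].
rewrite [Vhomog _ _]all_cat; apply/andP; split; last exact: IHg.
rewrite all_map; apply: sub_all (Vhomog_mmul t.2 t2.2) => u /= /eqP ->.
by rewrite e.
Qed.

Lemma filter_emul_Vhomog n (p : pred int) (w : int) (s g : expr n) :
  Vhomog w g ->
  [seq u <- emul s g | p (Vw u.2)] = emul [seq t <- s | p (Vw t.2 + w)%R] g.
Proof.
move=> hg; elim: s => [|t s IH] //=.
have ht := Vhomog_emul1 t hg.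
rewrite emul_cons filter_cat IH.
case pt: (p (Vw t.2 + w)%R) => /=.
  rewrite [in RHS]emul_cons; congr (_ ++ _).
  by apply/all_filterP; apply: sub_all ht => u /= /eqP ->.
rewrite -[RHS]cat0s; congr (_ ++ _).
elim: (emul [:: t] g) ht => //= u us IHu /andP [/eqP eu hus].
by rewrite eu pt IHu.
Qed.

Definition head_Vw n (g : expr n) : int := if g is t :: _ then Vw t.2 else 0%R.

Lemma Vhomog_head_Vw n (w : int) (g : expr n) : Vhomog w g -> Vhomog (head_Vw g) g.
Proof. by case: g => //= t g /andP [/eqP e h]; rewrite /Vhomog /= eqxx e. Qed.

Section HomogeneousIdeal.
Variables (n : nat) (G : expr n -> Prop).
Hypothesis G_homog : forall g, G g -> Vhomog (head_Vw g) g.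

Lemma lideal_Vpart (p : pred int) (R : Del n) : lideal G R -> lideal G (Vpart p R).
Proof.
case=> l [hl ->].
exists [seq ([seq t <- pr.1 | p (Vw t.2 + head_Vw pr.2)%R], pr.2) | pr <- l]; split.
  by move=> pr /List.in_map_iff [x [<- hx]] /=; apply: hl.
rewrite -ev_filter_Vw; congr ev.
elim: l hl => //= pr l IH hl.
rewrite filter_cat (filter_emul_Vhomog _ _ (G_homog (hl pr _))) ?IH //; last by left.
by move=> x hx; apply: hl; right.
Qed.

End HomogeneousIdeal.

Lemma lideal_add n (G : expr n -> Prop) R1 R2 :
  lideal G R1 -> lideal G R2 -> lideal G (Dadd R1 R2).
Proof.
case=> l1 [h1 ->] [l2 [h2 ->]]; exists (l1 ++ l2); split.
  by move=> p hp; case: (List.in_app_or _ _ _ hp) => ?; [apply: h1 | apply: h2].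
by rewrite map_cat flatten_cat ev_cat.
Qed.

(* Multiplying A u = A v by the row vector q with q A = (1,...,1) gives |u| = |v|. *)
Lemma toric_exps_sumn_eq d n (A : 'M[int]_(d, n)) (q : 'I_d -> rat)
  (hq : forall j : 'I_n, (\sum_(i < d) q i * (A i j)%:~R)%R = 1%R)
  (u v : {ffun 'I_n -> nat}) :
  (forall i, \sum_(j < n) A i j * (u j)%:Z = \sum_(j < n) A i j * (v j)%:Z)%R ->
  (\sum_(j < n) u j = \sum_(j < n) v j)%N.
Proof.
move=> h.
have sumn_q (w : {ffun 'I_n -> nat}) : ((\sum_(j < n) w j)%N%:R : rat) =
    (\sum_(i < d) q i * (\sum_(j < n) A i j * (w j)%:Z)%R%:~R)%R.
  rewrite natr_sum.
  under eq_bigr => j _ do rewrite -[((w j)%:R : rat)]mul1r -{1}(hq j) mulr_suml.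
  rewrite exchange_big /=; apply: eq_bigr => i _.
  rewrite rmorph_sum mulr_sumr; apply: eq_bigr => j _.
  by rewrite /= intrM mulrA pmulrn.
by apply/eqP; rewrite -(eqr_nat rat) !sumn_q; apply/eqP; apply: eq_bigr => i _; rewrite h.
Qed.

Lemma Vw_diag n (a : {ffun 'I_n -> nat}) : Vw (a, a) = 0%R.
Proof. by rewrite /Vw subrr. Qed.

Lemma HA_gen_Vhomog d n (A : 'M[int]_(d, n)) (q : 'I_d -> rat)
  (hq : forall j : 'I_n, (\sum_(i < d) q i * (A i j)%:~R)%R = 1%R)
  (beta : 'I_d -> CC) (g : expr n) :
  toric_gen A g \/ (exists i, g = euler A beta i) -> Vhomog (head_Vw g) g.
Proof.
case=> [[u [v [h ->]]]|[i ->]].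
  by rewrite /Vhomog /= eqxx /Vw /= (toric_exps_sumn_eq hq h) eqxx.
apply: (@Vhomog_head_Vw _ 0%R).
rewrite /Vhomog /euler all_cat all_map /= Vw_diag eqxx !andbT.
by apply/allP => j _ /=; rewrite Vw_diag.
Qed.

Definition Vle (k : int) : pred int := fun x => (x <= k)%R.

Lemma Ffilt_Vpart n (dd : int) (p : pred int) (s : expr n) :
  all (fun t => (Fw t.2 <= dd)%R) s -> Ffilt dd (Vpart p (ev s)).
Proof.
move=> hs; exists [seq t <- s | p (Vw t.2)]; rewrite ev_filter_Vw; split=> //.
by rewrite all_filter; apply: sub_all hs => t /= ->; rewrite implybT.
Qed.

Lemma Vfilt_Vpart_Vle n (k : int) (s : expr n) : Vfilt k (Vpart (Vle k) (ev s)).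
Proof. by exists [seq t <- s | Vle k (Vw t.2)]; rewrite ev_filter_Vw filter_all. Qed.

Lemma Vpart_Vle_id n (k : int) (Q : Del n) : Vfilt k Q -> Vpart (Vle k) Q = Q.
Proof. by case=> s [hs ->]; rewrite -ev_filter_Vw; congr ev; apply/all_filterP. Qed.

Lemma HA_Vpart d n (A : 'M[int]_(d, n)) (q : 'I_d -> rat)
  (hq : forall j : 'I_n, (\sum_(i < d) q i * (A i j)%:~R)%R = 1%R)
  (beta : 'I_d -> CC) (p : pred int) (R : Del n) :
  HA A beta R -> HA A beta (Vpart p R).
Proof. exact/lideal_Vpart/HA_gen_Vhomog. Qed.

Theorem lemma9 (d n : nat) (A : 'M[int]_(d, n))
  (hgen : forall z : 'I_d -> int, exists c : 'I_n -> int,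
            forall i, z i = (\sum_(j < n) A i j * c j)%R)
  (hrow : exists q : 'I_d -> rat, forall j : 'I_n,
            (\sum_(i < d) q i * (A i j)%:~R)%R = 1%R)
  (beta : 'I_d -> CC) :
  nicely_bifiltered A beta.
Proof.
have [q hq] := hrow.
move=> dd k P; split; last by move=> hP; split; [exists dd | exists k].
case=> [[dd' [Q1 [R1 [[_ hQ1] [hR1 eP1]]]]] [k' [Q2 [R2 [[[s2 [hs2 eQ2]] _] [hR2 eP2]]]]]].
exists (Vpart (Vle k) Q2), (Dadd (Vpart (Vle k) R2) (Vpart (predC (Vle k)) R1)).
split; [split|split].
- by rewrite eQ2; apply: Ffilt_Vpart.
- by rewrite eQ2; apply: Vfilt_Vpart_Vle.
- by apply: lideal_add; apply: (HA_Vpart hq).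
apply: functional_extensionality => m; rewrite /Dadd /Vpart /=.
case hm: (Vle k (Vw m)) => /=.
  by rewrite Cadd0r eP2.
have hQ1m : Q1 m = C0 by rewrite -(Vpart_Vle_id hQ1) /Vpart hm.
by rewrite eP1 /Dadd hQ1m !Cadd0l.
Qed.
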